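(* Let $\mathcal T$ denote the set of Smirnov trees and, for $T\in\mathcal T$, let $a(T)$ be the label of its principal node $\alpha(T)$. Consider the set $$\mathcal X=\{(T,S,b)\in \mathcal T\times(\mathcal T\cup\{D,U\})\times\mathbb N:\ a(T)\neq b\},$$ where $D$ and $U$ are two formal symbols. Then the map $\Phi$ (defined in the context) is a well-defined bijection from $\mathcal X$ onto the set of Smirnov trees with at least $2$ nodes; it is weight-preserving, i.e. $w(\Phi(T,S,b))=w(T,S,b)$ for all $(T,S,b)\in\mathcal X$; and the principal node of $\Phi(T,S,b)$ has label $b$.
   Context: Trees are labeled rooted binary trees (each child is either a left or a right child, each node has at most one left and one right child) with labels in the positive integers $\mathbb N=\{1,2,\dots\}$, and have at least one node. Such a tree is a Smirnov tree if: whenever a left child has the same label $i$ as its parent, the parent also has a right child with label $<i$; and whenever a right child has the same label $i$ as its parent, the parent also has a left child with label $>i$. Let $\mathcal T$ be the set of Smirnov trees and $\mathcal T^c$ those whose root has label $c$. Principal path $P(T)$: start at the root; if the current vertex has no right child, stop; if the current vertex has a left child with the same label, move to that left child; otherwise move to the right child. The last vertex of $P(T)$ is the principal node $\alpha(T)$, with label $a(T)$; $M(T)$ and $m(T)$ are the maximum and minimum labels on $P(T)$. Weights: $\rho,\bar\rho,\lambda,\bar\lambda$ are commuting indeterminates and $x_1,x_2,\dots$ commuting variables. An edge from a parent with label $a$ to its right child with label $b$ has weight $\bar\rho$ if $a\le b$ and $\rho$ if $a>b$. An edge between a left child with label $a$ and its parent with label $b$ has weight $\bar\lambda$ if $a\le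 b$ and $\lambda$ if $a>b$. A node with label $a$ has weight $x_a$. The weight $w(T)$ of a tree is the product of the weights of all its edges and nodes. Weight of a triple $(T,S,b)\in\mathcal X$, with $a=a(T)$: $w(T,S,b)$ equals $\bar\rho\,w(T)x_b$ if $a<b,S=D$; $\rho\,w(T)x_b$ if $a>b,S=D$; $\bar\lambda\,w(T)x_b$ if $a<b,S=U$; $\lambda\,w(T)x_b$ if $a>b,S=U$; $\bar\lambda\bar\rho\,w(T)w(S)x_b$ if $a<b,S\in\mathcal T$; $\lambda\rho\,w(T)w(S)x_b$ if $a>b,S\in\mathcal T$. Definition of $\Phi(T,S,b)$. Write $\alpha=\alpha(T)$, $a=a(T)$, $P=P(T)$, $M=M(T)$, $m=m(T)$; if $S\in\mathcal T$ let $c$ be the label of its root. If $a<b$ (resp. $a>b$), let $\delta$ be the last vertex on $P$ with label $\ge b$ (resp. $\le b$) and $d$ its label (undefined if no such vertex exists). Note $\alpha$ has no right child. (1) If $S=D$, or $S\in\mathcal T^c$ with $a,c<b$, or $S\in\mathcal T^c$ with $a,c>b$: add to $\alpha$ a right child $\beta$ with label $b$; if $S=D$, $\beta$ has no children; if $S\in\mathcal T$, $\beta$ has $S$ as its left subtree (and no right child). (2) If $S=U$ and $a<b$, $M<b$; or $S=U$ and $a>b$, $m>b$; or $S\in\mathcal T^c$ and $a<b$, $M<b\le c$; or $S\in\mathcal T^c$ and $a>b$, $m>b\ge c$: add a new root $\beta$ with label $b$ whose left subtree is $T$ (and no right child); if $S\in\mathcal T$, additionally make $S$ the right subtree of $\alpha$.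 (3) If $S=U$, $a<b\le M$, $d>b$; or $S=U$, $a>b\ge m$, $d<b$; or $S\in\mathcal T^c$, $a<b$, $b\le c$, $b\le M$, $d>b$; or $S\in\mathcal T^c$, $a>b$, $b\ge c$, $b\ge m$, $d<b$: replace the right subtree of $\delta$ by a new node $\beta$ with label $b$, which has no right child and whose left subtree is the former right subtree of $\delta$; if $S\in\mathcal T$, additionally make $S$ the right subtree of $\alpha$. (4) If $S=U$, $a<b\le M$, $d=b$; or $S\in\mathcal T^c$, $a<b$, $b\le c$, $b\le M$, $d=b$: replace the left subtree of $\delta$ by a new node $\beta$ with label $b$, which has no right child and whose left subtree is the former left subtree of $\delta$ (empty if $\delta$ had none); if $S\in\mathcal T$, additionally make $S$ the right subtree of $\alpha$. (5) If $S=U$, $a>b\ge m$, $d=b$; or $S\in\mathcal T^c$, $a>b$, $b\ge c$, $b\ge m$, $d=b$: make the former right subtree of $\delta$ its new left subtree, and make its new right child a new node $\beta$ with label $b$, which has no right child and whose left subtree is the former left subtree of $\delta$; if $S\in\mathcal T$, additionally make $S$ the right subtree of $\alpha$. *)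

From mathcomp Require Import all_boot all_algebra.
Set Implicit Arguments. Unset Strict Implicit. Unset Printing Implicit Defensive.
Import GRing.Theory.

(* Labeled rooted binary trees; [Leaf] is the EMPTY (sub)tree, so a tree
   "with at least one node" is a [btree] different from [Leaf]. *)
Inductive btree : Type :=
| Leaf : btree
| Node : btree -> nat -> btree -> btree.

Definition isLeaf (t : btree) : bool := if t is Leaf then true else false.

(* label of the root; 0 for the empty tree (labels of real nodes are >= 1) *)
Definition lab (t : btree) : nat := if t is Node _ a _ then a else 0.

Fixpoint nnodes (t : btree) : nat :=
  if t is Node l _ r then (nnodes l + nnodes r).+1 else 0.

(* Smirnov condition at every node, plus labels in N = {1,2,...} *)
Fixpoint smir (t : btree) : bool :=
  match t with
  | Leaf => true
  | Node l a r =>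
      [&& 0 < a,
          (~~ isLeaf l && (lab l == a)) ==> (~~ isLeaf r && (lab r < a)),
          (~~ isLeaf r && (lab r == a)) ==> (~~ isLeaf l && (a < lab l)),
          smir l & smir r]
  end.

Definition smirnov (t : btree) : bool := ~~ isLeaf t && smir t.

(* Principal path: directions (false = go to left child, true = go to right
   child) and labels of the vertices on P(T). *)
Fixpoint pdirs (t : btree) : seq bool :=
  match t with
  | Leaf => [::]
  | Node l a r =>
      if isLeaf r then [::]
      else if ~~ isLeaf l && (lab l == a) then false :: pdirs l
      else true :: pdirs r
  end.

Fixpoint plabels (t : btree) : seq nat :=
  match t with
  | Leaf => [::]
  | Node l a r =>
      a :: (if isLeaf r then [::]
            else if ~~ isLeaf l && (lab l == a) then plabels l
            else plabels r)
  end.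

Definition plab (t : btree) : nat := last 0 (plabels t).
Definition pmax (t : btree) : nat := foldr maxn 0 (plabels t).
Definition pmin (t : btree) : nat :=
  foldr minn (head 0 (plabels t)) (plabels t).

Fixpoint subst_at (ds : seq bool) (f : btree -> btree) (t : btree) : btree :=
  match ds, t with
  | [::], _ => f t
  | _, Leaf => Leaf
  | false :: ds', Node l a r => Node (subst_at ds' f l) a r
  | true :: ds', Node l a r => Node l a (subst_at ds' f r)
  end.

Fixpoint lastidx (p : pred nat) (s : seq nat) : nat :=
  match s with
  | [::] => 0
  | _ :: s' => if has p s' then (lastidx p s').+1 else 0
  end.

Inductive Sarg : Type := SD | SU | ST of btree.

Definition inX (T : btree) (S : Sarg) (b : nat) : Prop :=
  [/\ smirnov T,
      (if S is ST s then smirnov s else true),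
      0 < b & plab T != b].

Definition set_right (s : btree) (t : btree) : btree :=
  if t is Node l x _ then Node l x s else Leaf.

Definition Phi (T : btree) (S : Sarg) (b : nat) : btree :=
  let a := plab T in
  let ds := pdirs T in
  let P := plabels T in
  let M := pmax T in
  let m := pmin T in
  let up := a < b in
  let attachS := fun t => if S is ST s then subst_at ds (set_right s) t else t in
  let p : pred nat := if up then (fun x => b <= x) else (fun x => x <= b) in
  let k := lastidx p P in
  let d := nth 0 P k in
  let dds := take k ds in
  let case1 := match S with
               | SD => true
               | SU => false
               | ST s => ((a < b) && (lab s < b)) || ((b < a) && (b < lab s))
               end in
  let Uok := match S with
             | SD => false
             | SU => true
             | ST s => if up then b <= lab s else lab s <= b
             end in
  if case1 then
    subst_at ds (set_right (Node (if S is ST s then s else Leaf) b Leaf)) T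
  else if Uok && (if up then M < b else b < m) then
    Node (attachS T) b Leaf
  else if [&& Uok, (if up then b <= M else m <= b) & (if up then b < d else d < b)] then
    subst_at dds (fun t => if t is Node l x r then Node l x (Node r b Leaf) else t)
             (attachS T)
  else if [&& Uok, up, b <= M & d == b] then
    subst_at dds (fun t => if t is Node l x r then Node (Node l b Leaf) x r else t)
             (attachS T)
  else if [&& Uok, ~~ up, m <= b & d == b] then
    subst_at dds (fun t => if t is Node l x r then Node r x (Node l b Leaf) else t)
             (attachS T)
  else T.

Section Weight.
Variables (R : comNzRingType) (rho rhob lam lamb : R) (x : nat -> R).

Fixpoint w (t : btree) : R :=
  match t with
  | Leaf => 1
  | Node l a r =>
      (x a * w l * w r
       * (if isLeaf l then 1 else if (lab l <= a)%N then lamb else lam)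
       * (if isLeaf r then 1 else if (a <= lab r)%N then rhob else rho))%R
  end.

Definition wX (T : btree) (S : Sarg) (b : nat) : R :=
  let a := plab T in
  match S with
  | SD => ((if (a < b)%N then rhob else rho) * w T * x b)%R
  | SU => ((if (a < b)%N then lamb else lam) * w T * x b)%R
  | ST s => ((if (a < b)%N then lamb * rhob else lam * rho) * w T * w s * x b)%R
  end.
End Weight.

(* A tree with principal node alpha is written as a zipper [plug c (Node l a Leaf)],
   where the context [c] lists the frames of the principal path. Principal paths,
   the Smirnov condition and the weight are all local along such a zipper, so each
   case of Phi becomes an explicit surgery on the context and is checked locally.
   The inverse is read off from the principal node beta of the image and its parent:
   no parent means case (2); beta a left child means case (4); beta a right child of
   a node labelled b means case (5); otherwise the left subtree of beta decides
   between cases (1) and (3). The second argument S is recovered by walking down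
   the principal path of the subtree that Phi moved and cutting off the first right
   subtree whose root lies on the far side of b. *)

From mathcomp Require Import all_boot all_algebra.
From mathcomp Require Import ring zify.
Set Implicit Arguments. Unset Strict Implicit. Unset Printing Implicit Defensive.
Import GRing.Theory.

Notation lab_eq t a := (~~ isLeaf t && (lab t == a)).

(* [FL x r]: the hole is the left child of a node labelled [x] with right
   subtree [r]; [FR l x]: the hole is the right child of a node labelled [x]
   with left subtree [l]. Contexts list their frames from the root downwards. *)
Inductive frame := FL of nat & btree | FR of btree & nat.

Definition frame_lab f := match f with FL x _ => x | FR _ x => x end.
Definition frame_dir f := match f with FL _ _ => false | FR _ _ => true end.

Fixpoint plug (c : seq frame) (t : btree) : btree :=
  match c with
  | [::] => t
  | FL x r :: c' => Node (plug c' t) x r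
  | FR l x :: c' => Node l x (plug c' t)
  end.

Definition top_lab (c : seq frame) (y : nat) := head y (map frame_lab c).

Definition principal_step (f : frame) (z : nat) : bool :=
  match f with
  | FL x r => (z == x) && ~~ isLeaf r
  | FR l x => ~~ lab_eq l x
  end.

(* In [plug c (Node l a Leaf)] the principal path runs along [c] down to the hole. *)
Fixpoint principal_ctx (c : seq frame) (a : nat) : bool :=
  if c is f :: c' then principal_step f (top_lab c' a) && principal_ctx c' a
  else true.

Lemma plug_cat c1 c2 t : plug (c1 ++ c2) t = plug c1 (plug c2 t).
Proof. by elim: c1 => [|[x r|l x] c IH] //=; rewrite IH. Qed.

Lemma plug_rcons c f t : plug (rcons c f) t = plug c (plug [:: f] t).
Proof. by rewrite -cats1 plug_cat. Qed.

Lemma plug_nonleaf c t : ~~ isLeaf t -> ~~ isLeaf (plug c t).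
Proof. by case: c => [|[x r|l x] c]. Qed.

Lemma lab_plug c t : lab (plug c t) = top_lab c (lab t).
Proof. by case: c => [|[x r|l x] c]. Qed.

Lemma top_lab_cat c1 c2 y : top_lab (c1 ++ c2) y = top_lab c1 (top_lab c2 y).
Proof. by case: c1. Qed.

Lemma top_lab_all (P : pred nat) c y :
  all P (map frame_lab c) -> P y -> P (top_lab c y).
Proof. by case: c => [|f c] //= /andP[]. Qed.

Lemma principal_ctx_cat c1 c2 a :
  principal_ctx (c1 ++ c2) a = principal_ctx c1 (top_lab c2 a) && principal_ctx c2 a.
Proof. by elim: c1 => [|f c IH] //=; rewrite IH top_lab_cat andbA. Qed.

Lemma principal_ctx_rcons c f a :
  principal_ctx (rcons c f) a = principal_ctx c (frame_lab f) && principal_step f a.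
Proof. by rewrite -cats1 principal_ctx_cat /= andbT. Qed.

Lemma principal_ctx_join c1 l y c2 a : principal_ctx c1 y -> ~~ lab_eq l y ->
  principal_ctx c2 a -> principal_ctx (c1 ++ FR l y :: c2) a.
Proof. by move=> h1 h2 h3; rewrite principal_ctx_cat /= h1 h2 h3. Qed.

Lemma nnodes_plug c t : nnodes t <= nnodes (plug c t).
Proof. by elim: c => [|[x r|l x] c IH] //=; lia. Qed.

Lemma two_le_nnodes_plug c t : 2 <= nnodes t -> 2 <= nnodes (plug c t).
Proof. by move/leq_trans; apply; apply: nnodes_plug. Qed.

Lemma subst_at_plug c f t : subst_at (map frame_dir c) f (plug c t) = plug c (f t).
Proof. by elim: c => [|[y r|l y] c IH] //=; rewrite IH. Qed.

Section PrincipalPath.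
Variables (l : btree) (a : nat).

Lemma pdirs_plug c : principal_ctx c a -> pdirs (plug c (Node l a Leaf)) = map frame_dir c.
Proof.
elim: c => [|[x r|l' x] c IH] //= /andP[hf /IH ->];
  rewrite (negbTE (plug_nonleaf _ _)) // ?lab_plug.
- by case/andP: hf => /eqP -> /negbTE ->; rewrite eqxx.
- by rewrite (negbTE hf).
Qed.

Lemma plabels_plug c :
  principal_ctx c a -> plabels (plug c (Node l a Leaf)) = rcons (map frame_lab c) a.
Proof.
elim: c => [|[x r|l' x] c IH] //= /andP[hf /IH ->];
  rewrite (negbTE (plug_nonleaf _ _)) // ?lab_plug.
- by case/andP: hf => /eqP -> /negbTE ->; rewrite eqxx.
- by rewrite (negbTE hf).
Qed.

Lemma plab_plug c : principal_ctx c a -> plab (plug c (Node l a Leaf)) = a.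
Proof. by move=> h; rewrite /plab plabels_plug // last_rcons. Qed.

End PrincipalPath.

Fixpoint principal_split (t : btree) : seq frame * btree * nat :=
  match t with
  | Leaf => ([::], Leaf, 0)
  | Node l x r =>
     if isLeaf r then ([::], l, x)
     else if lab_eq l x then
       let: (c, l', a) := principal_split l in (FL x r :: c, l', a)
     else let: (c, l', a) := principal_split r in (FR l x :: c, l', a)
  end.

Lemma principal_split_plug c l a :
  principal_ctx c a -> principal_split (plug c (Node l a Leaf)) = (c, l, a).
Proof.
elim: c => [|[x r|l' x] c IH] //= /andP[hf /IH ->];
  rewrite (negbTE (plug_nonleaf _ _)) // ?lab_plug.
- by case/andP: hf => /eqP -> /negbTE ->; rewrite eqxx.
- by rewrite (negbTE hf).
Qed.

Lemma principal_splitP t : ~~ isLeaf t ->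
  let: (c, l, a) := principal_split t in principal_ctx c a /\ t = plug c (Node l a Leaf).
Proof.
elim: t => [|l IHl x r IHr] //= _.
case: ifP => [|hr]; first by case: r {IHr}.
case: ifP => hl.
- case/andP: hl => hl /eqP hx.
  move: (IHl hl); case: (principal_split l) => [[c l'] a] [hp hl'].
  rewrite hl' lab_plug in hx; split; last by rewrite /= -hl'.
  by rewrite /= hp hr andbT -[X in _ == X]hx eqxx.
- move: (IHr (negbT hr)); case: (principal_split r) => [[c l'] a] [hp ->].
  by rewrite /= hp hl.
Qed.

Definition smir_node (l : btree) (a : nat) (r : btree) : bool :=
  [&& 0 < a, lab_eq l a ==> (~~ isLeaf r && (lab r < a))
   & lab_eq r a ==> (~~ isLeaf l && (a < lab l))].

Lemma smirE l a r : smir (Node l a r) = [&& smir_node l a r, smir l & smir r].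
Proof. by rewrite /= /smir_node !andbA. Qed.

Lemma smir_node_leaf l a : smir_node l a Leaf = (0 < a) && ~~ lab_eq l a.
Proof. by rewrite /smir_node /= implybF andbT. Qed.

Definition single z := Node Leaf z Leaf.

Lemma smir_node_singlel t a r :
  ~~ isLeaf t -> smir_node t a r = smir_node (single (lab t)) a r.
Proof. by case: t. Qed.

Lemma smir_node_singler t a l :
  ~~ isLeaf t -> smir_node l a t = smir_node l a (single (lab t)).
Proof. by case: t. Qed.

Lemma smir_node_singleE l y z : ~~ lab_eq l y -> z != y -> smir_node l y (single z) = (0 < y).
Proof. by move=> /negbTE hl /negbTE hz; rewrite /smir_node hl hz /= andbT. Qed.

Definition smir_frame (f : frame) (z : nat) : bool :=
  match f with
  | FL x r => smir_node (single z) x r && smir r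
  | FR l x => smir_node l x (single z) && smir l
  end.

Fixpoint smir_ctx (c : seq frame) (y : nat) : bool :=
  if c is f :: c' then smir_frame f (top_lab c' y) && smir_ctx c' y else true.

Lemma smir_plug c t : ~~ isLeaf t -> smir (plug c t) = smir_ctx c (lab t) && smir t.
Proof.
move=> ht; elim: c => [|[x r|l x] c IH] //=.
- rewrite -/(smir (Node (plug c t) x r)) smirE smir_node_singlel ?plug_nonleaf //.
  rewrite lab_plug IH.
  by case: (smir_node _ _ _); case: (smir r); case: (smir_ctx _ _); case: (smir t).
- rewrite -/(smir (Node l x (plug c t))) smirE smir_node_singler ?plug_nonleaf //.
  rewrite lab_plug IH.
  by case: (smir_node _ _ _); case: (smir l); case: (smir_ctx _ _); case: (smir t).
Qed.

Lemma smir_ctx_cat c1 c2 y :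
  smir_ctx (c1 ++ c2) y = smir_ctx c1 (top_lab c2 y) && smir_ctx c2 y.
Proof. by elim: c1 => [|f c IH] //=; rewrite IH top_lab_cat andbA. Qed.

Lemma smir_ctx_rcons c f y :
  smir_ctx (rcons c f) y = smir_ctx c (frame_lab f) && smir_frame f y.
Proof. by rewrite -cats1 smir_ctx_cat /= andbT. Qed.

Lemma smirnov_plug c l a r :
  smirnov (plug c (Node l a r)) = smir_ctx c a && smir (Node l a r).
Proof. by rewrite /smirnov plug_nonleaf // smir_plug. Qed.

Lemma smirnov_principal c l a :
  smirnov (plug c (Node l a Leaf)) = [&& smir_ctx c a, 0 < a, ~~ lab_eq l a & smir l].
Proof. by rewrite smirnov_plug smirE smir_node_leaf andbT !andbA. Qed.

Lemma smirnov_join c1 l y c2 l0 a : smir_ctx c1 y -> 0 < y -> ~~ lab_eq l y -> smir l ->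
  top_lab c2 a != y -> smirnov (plug c2 (Node l0 a Leaf)) ->
  smirnov (plug (c1 ++ FR l y :: c2) (Node l0 a Leaf)).
Proof.
move=> h1 h2 h3 h4 h5; rewrite !smirnov_principal smir_ctx_cat /= h1 h4.
by rewrite (smir_node_singleE h3 h5) h2.
Qed.

Lemma smirnov_FR_split c1 ld d c2 l a : principal_ctx (c1 ++ FR ld d :: c2) a ->
  smirnov (plug (c1 ++ FR ld d :: c2) (Node l a Leaf)) ->
  [/\ principal_ctx c1 d, principal_ctx c2 a, smirnov (plug c2 (Node l a Leaf)),
      ~~ lab_eq ld d & [&& smir_ctx c1 d, 0 < d & smir ld]].
Proof.
rewrite principal_ctx_cat smirnov_principal smir_ctx_cat /= => /and3P[-> hld ->].
case/and4P=> /and3P[-> /andP[/and3P[hd _ _] ->] hsc2] ha hla hl.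
by rewrite hd smirnov_principal hsc2 ha hla hl.
Qed.

Lemma foldr_maxn_lt (s : seq nat) b : 0 < b -> all (fun z => z < b) s -> foldr maxn 0 s < b.
Proof. by move=> hb; elim: s => [|z s IH] //= /andP[hz /IH h]; lia. Qed.

Lemma foldr_maxn_ge (s : seq nat) b : has (fun z => b <= z) s -> b <= foldr maxn 0 s.
Proof. by elim: s => [|z s IH] //= /orP[hz|/IH h]; lia. Qed.

Lemma foldr_minn_gt (s : seq nat) h b : b < h -> all (fun z => b < z) s -> b < foldr minn h s.
Proof. by move=> hb; elim: s => [|z s IH] //= /andP[hz /IH h2]; lia. Qed.

Lemma foldr_minn_le (s : seq nat) h b : has (fun z => z <= b) s -> foldr minn h s <= b.
Proof. by elim: s => [|z s IH] //= /orP[hz|/IH h']; lia. Qed.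

Lemma lastidx_cat (p : pred nat) s1 z s2 : p z -> ~~ has p s2 ->
  lastidx p (s1 ++ z :: s2) = size s1.
Proof.
move=> hz hs; elim: s1 => [|y s1 IH] /=; first by rewrite (negbTE hs).
by rewrite IH has_cat /= hz orbT.
Qed.

Lemma nth_size_cat (T : Type) (x0 : T) s1 z s2 : nth x0 (s1 ++ z :: s2) (size s1) = z.
Proof. by rewrite nth_cat ltnn subnn. Qed.

Lemma split_last_has (T : Type) (p : pred T) (s : seq T) : has p s ->
  exists s1 z s2, [/\ s = s1 ++ z :: s2, p z & ~~ has p s2].
Proof.
elim: s => [|z s IH] //= /orP[hz|hs].
  case hs: (has p s); last by exists [::], z, s; rewrite hs.
  by case: (IH hs) => s1 [y [s2 [-> hy hn]]]; exists (z :: s1), y, s2.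
by case: (IH hs) => s1 [y [s2 [-> hy hn]]]; exists (z :: s1), y, s2.
Qed.

Definition same_side (up : bool) b z := if up then z < b else b < z.

(* Up to conversion, [reaches (a < b) b] is the predicate [p] that [Phi] uses to
   locate delta. *)
Definition reaches (up : bool) b : pred nat :=
  if up then (fun z => b <= z) else (fun z => z <= b).

Definition case1 a b S :=
  match S with
  | SD => true
  | SU => false
  | ST s => (a < b) && (lab s < b) || (b < a) && (b < lab s)
  end.

Definition S_beyond (up : bool) b S :=
  match S with
  | SD => false
  | SU => true
  | ST s => if up then b <= lab s else lab s <= b
  end.

(* A [Prop], so that it is convertible to the corresponding component of [inX]. *)
Definition S_smirnov S : Prop := if S is ST s then smirnov s else true.

Definition Stree (S : Sarg) := if S is ST s then s else Leaf.

Lemma reachesN up b z : ~~ reaches up b z = same_side up b z.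
Proof. by case: up; rewrite /same_side /=; lia. Qed.

Lemma hasN_reaches up b s : ~~ has (reaches up b) s = all (same_side up b) s.
Proof. by rewrite -all_predC; apply: eq_all => z; rewrite /= reachesN. Qed.

Lemma reaches_refl up b : reaches up b b.
Proof. by case: up => /=. Qed.

Lemma same_side_self a b : a != b -> same_side (a < b) b a.
Proof. by rewrite /same_side; case: ltngtP. Qed.

Lemma same_side_neq up b z : same_side up b z -> (z == b) = false.
Proof. by case: up; rewrite /same_side; lia. Qed.

Lemma same_side_lt up b z : same_side up b z -> (z < b) = up.
Proof. by case: up; rewrite /same_side /=; lia. Qed.

Lemma same_side_le a b z : a != b -> same_side (a < b) b z -> (z <= b) = (a < b).
Proof. by rewrite /same_side; case: ltngtP => //= h _; lia. Qed.

Lemma same_side_opposite y b z : y != b -> z != b -> ((z < b) == (y < b)) = false ->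
  same_side (b < y) b z.
Proof. by rewrite /same_side; case: (ltngtP y b); case: (ltngtP z b). Qed.

Lemma same_side_opposite_neq y b z : y != b -> same_side (b < y) b z -> (z == y) = false.
Proof. by rewrite /same_side; case: ltngtP => //= h _ h'; lia. Qed.

Lemma reaches_opposite y b : y != b -> reaches (b < y) b y.
Proof. by rewrite /reaches; case: ltngtP => //= h _; lia. Qed.

Lemma reaches_same_side a b d z : a != b -> reaches (a < b) b d -> d != b ->
  same_side (a < b) b z -> [/\ ((z < b) == (d < b)) = false, (b < d) = (a < b),
                              (d <= b) = ~~ (a < b) & (d <= z) = ~~ (a < b)].
Proof. by rewrite /reaches /same_side; case: ltngtP => //= h _ h1 h2 h3; split; lia. Qed.

Lemma case1_ST y b s : y != b -> lab s != b -> (lab s < b) == (y < b) -> case1 y b (ST s).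
Proof. by rewrite /=; case: (ltngtP y b); case: (ltngtP (lab s) b). Qed.

Lemma case1_ST_lab a b s : case1 a b (ST s) ->
  [/\ (lab s < b) = (a < b), (lab s <= b) = (a < b) & lab s != b].
Proof. by rewrite /=; case: ltngtP => //= h h'; split; lia. Qed.

Lemma S_beyond_case1 a b S : a != b -> S_beyond (a < b) b S -> case1 a b S = false.
Proof. by case: S => //= s; case: ltngtP => //= _ _ h; lia. Qed.

Lemma case1_S_beyond a b S : a != b -> case1 a b S = false -> S_beyond (a < b) b S.
Proof.
case: S => //= s hab /negbT; rewrite negb_or !negb_and.
by case: ltngtP hab => //= h _; rewrite ?andbT -?leqNgt -?ltnNge.
Qed.

Lemma S_beyond_ST_lab a b s : a != b -> S_beyond (a < b) b (ST s) ->
  [/\ ~~ same_side (a < b) b (lab s), lab s != a & (a <= lab s) = (a < b)].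
Proof. by rewrite /S_beyond /same_side; case: ltngtP => //= h _ h'; split; lia. Qed.

Lemma same_side_extremum up b P : 0 < b -> P != [::] -> all (same_side up b) P ->
  (if up then foldr maxn 0 P < b else b < foldr minn (head 0 P) P).
Proof.
move=> hb; case: P => [|z P] // _ hall; case: up hall => hall.
- exact: foldr_maxn_lt.
- by apply: foldr_minn_gt => //; case/andP: hall.
Qed.

Lemma reaches_extremum up b P : has (reaches up b) P ->
  (if up then foldr maxn 0 P < b else b < foldr minn (head 0 P) P) = false /\
  (if up then b <= foldr maxn 0 P else foldr minn (head 0 P) P <= b).
Proof.
by case: up => h; [have := foldr_maxn_ge h | have := foldr_minn_le (head 0 P) h];
  split => //; apply/negbTE; rewrite -leqNgt.
Qed.

(* Inverse of the attachment of [S] performed by [Phi]. *)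
Fixpoint detach (p : pred nat) (t : btree) : btree * Sarg :=
  match t with
  | Leaf => (Leaf, SU)
  | Node l x r =>
     if isLeaf r then (t, SU)
     else if lab_eq l x then let: (l', S') := detach p l in (Node l' x r, S')
     else if p (lab r) then let: (r', S') := detach p r in (Node l x r', S')
     else (Node l x Leaf, ST r)
  end.

Definition detachable (p : pred nat) (l : btree) (a : nat) (S : Sarg) :=
  match S with
  | SD => false
  | SU => true
  | ST s => [&& ~~ isLeaf s, ~~ p (lab s) & ~~ lab_eq l a]
  end.

Lemma detach_plug (p : pred nat) c l a S : principal_ctx c a -> all p (map frame_lab c) ->
  p a -> detachable p l a S ->
  detach p (plug c (Node l a (Stree S))) = (plug c (Node l a Leaf), S).
Proof.
move=> hc hpc hpa hS.
elim: c hc hpc => [|[y r|l' y] c IH] /=.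
- by case: S hS => [||s] //= /and3P[/negbTE -> /negbTE -> /negbTE ->].
- case/andP=> /andP[/eqP hy /negbTE hr] hc /andP[_ hpc].
  by rewrite (IH hc hpc) hr (negbTE (plug_nonleaf _ _)) // lab_plug -hy eqxx.
- case/andP=> /negbTE hf hc /andP[_ hpc].
  rewrite (negbTE (plug_nonleaf _ _)) // hf lab_plug (top_lab_all hpc) //.
  by rewrite (IH hc hpc).
Qed.

Lemma detachP (p : pred nat) t : ~~ isLeaf t -> p (lab t) ->
  let: (t', S') := detach p t in
  exists c l a, [/\ t' = plug c (Node l a Leaf), t = plug c (Node l a (Stree S')),
    principal_ctx c a, detachable p l a S' & all p (map frame_lab c) && p a].
Proof.
elim: t => [|l IHl y r IHr] //= _ hpy.
case: ifP => hr; first by case: r hr {IHr} => // _; exists [::], l, y.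
case: ifP => hl.
  case/andP: hl => hl /eqP hly.
  have hpl : p (lab l) by rewrite hly.
  move: (IHl hl hpl); case: (detach p l) => l' S [c [l0 [a [-> hl' hc hS hpa]]]].
  exists (FL y r :: c), l0, a; split => //=; rewrite ?hpy -?hl' //.
  by rewrite hc hr andbT -hly hl' lab_plug eqxx.
case: ifP => hpr; last first.
  by exists [::], l, y; split => //=; rewrite hr hpr hl.
move: (IHr (negbT hr) hpr); case: (detach p r) => r' S [c [l0 [a [-> hr' hc hS hpa]]]].
exists (FR l y :: c), l0, a; split => //=; rewrite ?hpy -?hr' //.
by rewrite hc hl.
Qed.

Lemma detach_smirnov up b t : ~~ isLeaf t -> smir t -> same_side up b (lab t) ->
  let: (t', S') := detach (same_side up b) t in
  exists c l a, [/\ t' = plug c (Node l a Leaf), t = plug c (Node l a (Stree S')),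
                    principal_ctx c a, smirnov t' & S_smirnov S'] /\
                [/\ same_side up b a, all (same_side up b) (map frame_lab c) & S_beyond up b S'].
Proof.
move=> ht hst hsd; have := detachP ht hsd.
case: detach => t' S' [c [l [a [-> ht' hc hS /andP[hall hsa]]]]].
exists c, l, a; move: hst; rewrite {}ht' smir_plug // smirE /=.
case/andP=> hsc /and3P[hnode hl hsS]; split; split => //.
- rewrite smirnov_principal hsc hl andbT; move: hnode; rewrite /smir_node => /and3P[-> h _].
  by case: S' hS h {hsS} => [||s] //= /and3P[].
- by case: S' hS hsS {hnode} => [||s] //= /and3P[hs _ _] hsS; rewrite /smirnov hs.
- case: S' hS {hnode hsS} => [||s] //= /and3P[_ h _].
  by move: h; rewrite -reachesN negbK; case: (up).
Qed.

Ltac unfold_Phi hc :=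
  rewrite /Phi; cbv beta zeta;
  rewrite /pmax /pmin (plab_plug _ hc) (pdirs_plug _ hc) (plabels_plug _ hc).

Lemma Phi_case1 c l a S b : principal_ctx c a -> case1 a b S ->
  Phi (plug c (Node l a Leaf)) S b = plug (rcons c (FR l a)) (Node (Stree S) b Leaf).
Proof.
move=> hc h1; unfold_Phi hc; rewrite /case1 in h1.
by rewrite h1 subst_at_plug plug_rcons; case: S h1.
Qed.

Lemma Phi_case2 c l a S b : principal_ctx c a -> 0 < b -> a != b -> S_beyond (a < b) b S ->
  all (same_side (a < b) b) (map frame_lab c) ->
  Phi (plug c (Node l a Leaf)) S b = Node (plug c (Node l a (Stree S))) b Leaf.
Proof.
move=> hc hb hab hS hall; unfold_Phi hc.
have := S_beyond_case1 hab hS; rewrite /case1 => ->.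
have := hS; rewrite /S_beyond => ->.
have hallP : all (same_side (a < b) b) (rcons (map frame_lab c) a).
  by rewrite all_rcons same_side_self.
rewrite (same_side_extremum hb _ hallP); last by rewrite -size_eq0 size_rcons.
by case: S {hS} => [||s] //=; rewrite subst_at_plug.
Qed.

(* Cases (3)-(5), with delta the node of the frame [FR ld d]. *)
Lemma Phi_case345 c1 ld d c2 l a S b : principal_ctx (c1 ++ FR ld d :: c2) a ->
  0 < b -> a != b -> S_beyond (a < b) b S ->
  all (same_side (a < b) b) (map frame_lab c2) -> reaches (a < b) b d ->
  Phi (plug (c1 ++ FR ld d :: c2) (Node l a Leaf)) S b =
  if d == b then
    (if a < b then plug (rcons c1 (FL b (plug c2 (Node l a (Stree S))))) (Node ld b Leaf)
     else plug (rcons c1 (FR (plug c2 (Node l a (Stree S))) b)) (Node ld b Leaf))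
  else plug (rcons c1 (FR ld d)) (Node (plug c2 (Node l a (Stree S))) b Leaf).
Proof.
move=> hc hb hab hS hall hd; unfold_Phi hc.
have := S_beyond_case1 hab hS; rewrite /case1 => ->.
have := hS; rewrite /S_beyond => ->.
set P := rcons _ a.
have eP : P = map frame_lab c1 ++ d :: rcons (map frame_lab c2) a.
  by rewrite /P map_cat rcons_cat.
have hnh : ~~ has (reaches (a < b) b) (rcons (map frame_lab c2) a).
  by rewrite has_rcons negb_or reachesN same_side_self //= hasN_reaches.
have hhit : has (reaches (a < b) b) P by rewrite eP has_cat /= hd orbT.
have [-> hM] := reaches_extremum hhit; rewrite hM.
rewrite eP (lastidx_cat (p := reaches (a < b) b) _ hd hnh) nth_size_cat size_map -eP.
rewrite map_cat take_size_cat ?size_map // -map_cat.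
have -> : (match S with
  | ST s => subst_at (map frame_dir (c1 ++ FR ld d :: c2)) (set_right s)
              (plug (c1 ++ FR ld d :: c2) (Node l a Leaf))
  | _ => plug (c1 ++ FR ld d :: c2) (Node l a Leaf) end) =
  plug c1 (Node ld d (plug c2 (Node l a (Stree S)))).
  by case: (S) => [||s] /=; rewrite ?subst_at_plug plug_cat.
rewrite !subst_at_plug !plug_rcons /=.
case: eqP => [-> | /eqP hdb]; first by rewrite ltnn; case: (a < b) hM => /= ->.
suff -> : (if a < b then b < d else d < b) by [].
by move: hd hdb; rewrite /reaches; case: (a < b) => /=; lia.
Qed.

Definition unsnoc (c : seq frame) : option (seq frame * frame) :=
  if rev c is f :: r then Some (rev r, f) else None.

Lemma unsnoc_rcons c f : unsnoc (rcons c f) = Some (c, f).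
Proof. by rewrite /unsnoc rev_rcons revK. Qed.

Lemma unsnocP c : if unsnoc c is Some (c1, f) then c = rcons c1 f else c = [::].
Proof.
rewrite /unsnoc; case E: (rev c) => [|f r]; rewrite -[c]revK E //.
by rewrite rev_cons.
Qed.

Definition Phi_inv (U : btree) : btree * Sarg * nat :=
  let: (c, l, b) := principal_split U in
  match unsnoc c with
  | None => let: (T, S') := detach (same_side (lab l < b) b) l in (T, S', b)
  | Some (c1, FL _ r) =>
      let: (r', S') := detach (same_side true b) r in (plug c1 (Node l b r'), S', b)
  | Some (c1, FR l1 y) =>
      if y == b then
        let: (r', S') := detach (same_side false b) l1 in (plug c1 (Node l b r'), S', b)
      else if isLeaf l || ((lab l < b) == (y < b)) then
        (plug c1 (Node l1 y Leaf), if isLeaf l then SD else ST l, b)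
      else
        let: (r', S') := detach (same_side (b < y) b) l in (plug c1 (Node l1 y r'), S', b)
  end.

Definition image_spec T S b U :=
  [/\ smirnov U, 2 <= nnodes U, plab U = b & Phi_inv U = (T, S, b)].

Lemma image_spec_case1 c l a S b : principal_ctx c a -> smirnov (plug c (Node l a Leaf)) ->
  S_smirnov S -> 0 < b -> a != b -> case1 a b S ->
  image_spec (plug c (Node l a Leaf)) S b (plug (rcons c (FR l a)) (Node (Stree S) b Leaf)).
Proof.
move=> hc; rewrite smirnov_principal => /and4P[hsc ha hla hl] hS hb hab h1.
have hc' : principal_ctx (rcons c (FR l a)) b by rewrite principal_ctx_rcons hc.
split.
- rewrite smirnov_plug smir_ctx_rcons hsc smirE /= /smir_node /= ha hl (negbTE hla) /=.
  rewrite eq_sym (negbTE hab) hb /= implybF andbT.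
  by case: S hS h1 => [||s] //= /andP[-> ->] /case1_ST_lab[_ _ /negbTE ->].
- by rewrite plug_rcons two_le_nnodes_plug //= ltnS ?addnS ?addSn.
- exact: plab_plug.
- rewrite /Phi_inv principal_split_plug // unsnoc_rcons (negbTE hab).
  case: S hS h1 => [||s] //= /andP[/negbTE -> _] /case1_ST_lab[-> _ _].
  by rewrite eqxx.
Qed.

(* In cases (2)-(5) [Phi] moves the subtree [plug c (Node l a (Stree S))]: all of
   [T], or the part of [T] below delta, with [S] attached to alpha. *)
Lemma moved_subtree c l a S b : principal_ctx c a -> smirnov (plug c (Node l a Leaf)) ->
  S_smirnov S -> a != b -> S_beyond (a < b) b S -> all (same_side (a < b) b) (map frame_lab c) ->
  [/\ smir (plug c (Node l a (Stree S))), same_side (a < b) b (top_lab c a)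
    & detach (same_side (a < b) b) (plug c (Node l a (Stree S))) = (plug c (Node l a Leaf), S)].
Proof.
move=> hc; rewrite smirnov_principal => /and4P[hsc ha hla hl] hS hab hSb hall.
have hsa := same_side_self hab.
split; [|exact: top_lab_all|apply: detach_plug => //].
- rewrite smir_plug // hsc smirE /smir_node ha hl (negbTE hla) /=.
  case: S hS hSb => [||s] //= /andP[-> ->] /(S_beyond_ST_lab hab)[_ /negbTE -> _].
  by rewrite andbT.
- case: S hS hSb => [||s] //= /andP[-> _] /(S_beyond_ST_lab hab)[-> _ _].
  by rewrite hla.
Qed.

Lemma image_spec_case2 c l a S b : principal_ctx c a -> smirnov (plug c (Node l a Leaf)) ->
  S_smirnov S -> 0 < b -> a != b -> S_beyond (a < b) b S ->
  all (same_side (a < b) b) (map frame_lab c) ->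
  image_spec (plug c (Node l a Leaf)) S b (Node (plug c (Node l a (Stree S))) b Leaf).
Proof.
move=> hc hT hS hb hab hSb hall.
have [hsR hside hdet] := moved_subtree hc hT hS hab hSb hall.
have hR : ~~ isLeaf (plug c (Node l a (Stree S))) by apply: plug_nonleaf.
split => //.
- by rewrite /smirnov smirE smir_node_leaf hb hR lab_plug (same_side_neq hside) hsR.
- by move: hR; rewrite /=; case: plug.
- rewrite /Phi_inv (principal_split_plug (c := [::])) //= lab_plug.
  by rewrite (same_side_lt hside) hdet.
Qed.

Lemma image_spec_case3 c1 ld d c2 l a S b : principal_ctx (c1 ++ FR ld d :: c2) a ->
  smirnov (plug (c1 ++ FR ld d :: c2) (Node l a Leaf)) -> S_smirnov S -> 0 < b -> a != b ->
  S_beyond (a < b) b S -> all (same_side (a < b) b) (map frame_lab c2) ->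
  reaches (a < b) b d -> d != b ->
  image_spec (plug (c1 ++ FR ld d :: c2) (Node l a Leaf)) S b
    (plug (rcons c1 (FR ld d)) (Node (plug c2 (Node l a (Stree S))) b Leaf)).
Proof.
move=> hc hT hS hb hab hSb hall hd hdb.
have [hc1 hc2 hT2 hld /and3P[hsc1 hd0 hsld]] := smirnov_FR_split hc hT.
have [hsR hside hdet] := moved_subtree hc2 hT2 hS hab hSb hall.
have hR : ~~ isLeaf (plug c2 (Node l a (Stree S))) by apply: plug_nonleaf.
have hc' : principal_ctx (rcons c1 (FR ld d)) b by rewrite principal_ctx_rcons hc1.
split.
- have hbd : b != d by rewrite eq_sym.
  rewrite smirnov_principal smir_ctx_rcons hsc1 /= (smir_node_singleE hld hbd) hd0 hsld.
  by rewrite hb hR lab_plug (same_side_neq hside) hsR.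
- by rewrite plug_rcons two_le_nnodes_plug //= ltnS ?addnS ?addSn.
- exact: plab_plug.
- rewrite /Phi_inv principal_split_plug // unsnoc_rcons (negbTE hdb) (negbTE hR) /=.
  rewrite lab_plug plug_cat /=.
  by have [-> -> _ _] := reaches_same_side hab hd hdb hside; rewrite hdet.
Qed.

Lemma image_spec_case4 c1 ld c2 l a S b : principal_ctx (c1 ++ FR ld b :: c2) a ->
  smirnov (plug (c1 ++ FR ld b :: c2) (Node l a Leaf)) -> S_smirnov S -> 0 < b -> a < b ->
  S_beyond (a < b) b S -> all (same_side (a < b) b) (map frame_lab c2) ->
  image_spec (plug (c1 ++ FR ld b :: c2) (Node l a Leaf)) S b
    (plug (rcons c1 (FL b (plug c2 (Node l a (Stree S))))) (Node ld b Leaf)).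
Proof.
move=> hc hT hS hb hab hSb hall.
have hab' : a != b by rewrite neq_ltn hab.
have [hc1 hc2 hT2 hld /and3P[hsc1 _ hsld]] := smirnov_FR_split hc hT.
have [hsR hside hdet] := moved_subtree hc2 hT2 hS hab' hSb hall.
have hR : ~~ isLeaf (plug c2 (Node l a (Stree S))) by apply: plug_nonleaf.
rewrite hab in hside hdet.
have hc' : principal_ctx (rcons c1 (FL b (plug c2 (Node l a (Stree S))))) b.
  by rewrite principal_ctx_rcons hc1 /= eqxx.
split.
- have hlt : top_lab c2 a < b := hside.
  rewrite smirnov_principal smir_ctx_rcons hsc1 /= /smir_node hb eqxx /= hR lab_plug /=.
  by rewrite (same_side_neq hside) hlt hsR hld hsld.
- by rewrite plug_rcons two_le_nnodes_plug //= ltnS ?addnS ?addSn.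
- exact: plab_plug.
- by rewrite /Phi_inv principal_split_plug // unsnoc_rcons hdet plug_cat.
Qed.

Lemma image_spec_case5 c1 ld c2 l a S b : principal_ctx (c1 ++ FR ld b :: c2) a ->
  smirnov (plug (c1 ++ FR ld b :: c2) (Node l a Leaf)) -> S_smirnov S -> 0 < b -> b < a ->
  S_beyond (a < b) b S -> all (same_side (a < b) b) (map frame_lab c2) ->
  image_spec (plug (c1 ++ FR ld b :: c2) (Node l a Leaf)) S b
    (plug (rcons c1 (FR (plug c2 (Node l a (Stree S))) b)) (Node ld b Leaf)).
Proof.
move=> hc hT hS hb hab hSb hall.
have hab' : a != b by rewrite neq_ltn hab orbT.
have [hc1 hc2 hT2 hld /and3P[hsc1 _ hsld]] := smirnov_FR_split hc hT.
have [hsR hside hdet] := moved_subtree hc2 hT2 hS hab' hSb hall.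
have hR : ~~ isLeaf (plug c2 (Node l a (Stree S))) by apply: plug_nonleaf.
rewrite ltnNge (ltnW hab) in hside hdet.
have hc' : principal_ctx (rcons c1 (FR (plug c2 (Node l a (Stree S))) b)) b.
  by rewrite principal_ctx_rcons hc1 /= lab_plug (same_side_neq hside) andbF.
split.
- have hlt : b < top_lab c2 a := hside.
  rewrite smirnov_principal smir_ctx_rcons hsc1 /= /smir_node hb eqxx /= hR lab_plug /=.
  by rewrite (same_side_neq hside) hlt hsR hld hsld.
- by rewrite plug_rcons two_le_nnodes_plug //= ltnS ?addnS ?addSn.
- exact: plab_plug.
- by rewrite /Phi_inv principal_split_plug // unsnoc_rcons eqxx hdet plug_cat.
Qed.

Section Weights.
Variables (R : comNzRingType) (rho rhob lam lamb : R) (x : nat -> R).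
Local Notation w := (w rho rhob lam lamb x).
Local Notation wX := (wX rho rhob lam lamb x).
Local Open Scope ring_scope.

Definition wl (l : btree) a : R :=
  if isLeaf l then 1 else if (lab l <= a)%N then lamb else lam.
Definition wr a (r : btree) : R :=
  if isLeaf r then 1 else if (a <= lab r)%N then rhob else rho.

Lemma wE l a r : w (Node l a r) = x a * w l * w r * wl l a * wr a r.
Proof. by []. Qed.

Definition w_frame (f : frame) (z : nat) : R :=
  match f with
  | FL y r => x y * w r * wl (single z) y * wr y r
  | FR l y => x y * w l * wl l y * wr y (single z)
  end.

Fixpoint w_ctx (c : seq frame) (y : nat) : R :=
  if c is f :: c' then w_frame f (top_lab c' y) * w_ctx c' y else 1.

Lemma w_plug c t : ~~ isLeaf t -> w (plug c t) = w_ctx c (lab t) * w t.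
Proof.
move=> ht; elim: c => [|[y r|l y] c IH] /=; first by rewrite mul1r.
- rewrite -/(w (Node (plug c t) y r)) wE IH /wl (negbTE (plug_nonleaf c ht)) lab_plug /=.
  ring.
- rewrite -/(w (Node l y (plug c t))) wE IH /wr (negbTE (plug_nonleaf c ht)) lab_plug /=.
  ring.
Qed.

Lemma w_plug_right c l a t :
  w (plug c (Node l a t)) = w (plug c (Node l a Leaf)) * (w t * wr a t).
Proof. by rewrite !w_plug // !wE /wr /=; ring. Qed.

Lemma w_Stree a b S : a != b -> S_smirnov S -> S_beyond (a < b)%N b S ->
  w (Stree S) * wr a (Stree S) = if S is ST s then w s * (if (a < b)%N then rhob else rho) else 1.
Proof.
case: S => [||s] hab //=; rewrite ?mulr1 // /wr => /andP[/negbTE -> _].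
by case/(S_beyond_ST_lab hab) => _ _ ->.
Qed.

Lemma w_case1 c l a S b : principal_ctx c a -> S_smirnov S -> a != b -> case1 a b S ->
  w (plug (rcons c (FR l a)) (Node (Stree S) b Leaf)) = wX (plug c (Node l a Leaf)) S b.
Proof.
move=> hc hS hab h1; rewrite /wX plab_plug // plug_rcons /= w_plug_right wE /wr /wl /=.
rewrite [(a <= b)%N]leq_eqVlt (negbTE hab) /=.
case: S hS h1 => [||s] //= => [_ _|/andP[/negbTE -> _] /case1_ST_lab[_ -> _]];
  by case: (a < b)%N; ring.
Qed.

Lemma w_case2 c l a S b : principal_ctx c a -> S_smirnov S -> a != b -> S_beyond (a < b)%N b S ->
  all (same_side (a < b)%N b) (map frame_lab c) ->
  w (Node (plug c (Node l a (Stree S))) b Leaf) = wX (plug c (Node l a Leaf)) S b.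
Proof.
move=> hc hS hab hSb hall.
have hside := top_lab_all hall (same_side_self hab).
rewrite /wX plab_plug // wE w_plug_right (w_Stree hab hS hSb) /wl /wr /=.
rewrite (negbTE (plug_nonleaf _ _)) // lab_plug (same_side_le hab hside).
by case: S hSb {hS} => [||s] // _; case: (a < b)%N; ring.
Qed.

Lemma w_case3 c1 ld d c2 l a S b : principal_ctx (c1 ++ FR ld d :: c2) a -> S_smirnov S ->
  a != b -> S_beyond (a < b)%N b S -> all (same_side (a < b)%N b) (map frame_lab c2) ->
  reaches (a < b)%N b d -> d != b ->
  w (plug (rcons c1 (FR ld d)) (Node (plug c2 (Node l a (Stree S))) b Leaf)) =
  wX (plug (c1 ++ FR ld d :: c2) (Node l a Leaf)) S b.
Proof.
move=> hc hS hab hSb hall hd hdb.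
have hside := top_lab_all hall (same_side_self hab).
have [_ _ hdb' hdz] := reaches_same_side hab hd hdb hside.
rewrite /wX plab_plug // plug_rcons plug_cat /= (w_plug_right c1 ld d (Node _ b Leaf)).
rewrite (w_plug_right c1 ld d (plug c2 _)) wE (w_plug_right c2) (w_Stree hab hS hSb).
rewrite /wl /wr /= !(negbTE (plug_nonleaf _ _)) // !lab_plug /=.
rewrite (same_side_le hab hside) hdb' hdz.
by case: S hSb {hS} => [||s] // _; case: (a < b)%N; ring.
Qed.

Lemma w_case4 c1 ld c2 l a S b : principal_ctx (c1 ++ FR ld b :: c2) a -> S_smirnov S ->
  (a < b)%N -> S_beyond (a < b)%N b S -> all (same_side (a < b)%N b) (map frame_lab c2) ->
  w (plug (rcons c1 (FL b (plug c2 (Node l a (Stree S))))) (Node ld b Leaf)) =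
  wX (plug (c1 ++ FR ld b :: c2) (Node l a Leaf)) S b.
Proof.
move=> hc hS hab hSb hall.
have hab' : a != b by rewrite neq_ltn hab.
have hside : (top_lab c2 a < b)%N.
  by have := top_lab_all hall (same_side_self hab'); rewrite hab.
rewrite /wX plab_plug // plug_rcons plug_cat /= !(w_plug c1) // !wE (w_plug_right c2).
rewrite (w_Stree hab' hS hSb) /wl /wr /= !(negbTE (plug_nonleaf _ _)) // !lab_plug /=.
rewrite (leqnn b) (ltn_geF hside) hab.
by case: S hSb {hS} => [||s] // _; ring.
Qed.

Lemma w_case5 c1 ld c2 l a S b : principal_ctx (c1 ++ FR ld b :: c2) a -> S_smirnov S ->
  (b < a)%N -> S_beyond (a < b)%N b S -> all (same_side (a < b)%N b) (map frame_lab c2) ->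
  w (plug (rcons c1 (FR (plug c2 (Node l a (Stree S))) b)) (Node ld b Leaf)) =
  wX (plug (c1 ++ FR ld b :: c2) (Node l a Leaf)) S b.
Proof.
move=> hc hS hab hSb hall.
have hab' : a != b by rewrite neq_ltn hab orbT.
have hba : (a < b)%N = false by rewrite ltnNge ltnW.
have hside : (b < top_lab c2 a)%N.
  by have := top_lab_all hall (same_side_self hab'); rewrite hba.
rewrite /wX plab_plug // plug_rcons plug_cat /= !(w_plug c1) // !wE (w_plug_right c2).
rewrite (w_Stree hab' hS hSb) /wl /wr /= !(negbTE (plug_nonleaf _ _)) // !lab_plug /=.
rewrite (leqnn b) (ltn_geF hside) (ltnW hside) hba.
by case: S hSb {hS} => [||s] // _; ring.
Qed.

End Weights.

Lemma inX_plug c l a S b : principal_ctx c a -> smirnov (plug c (Node l a Leaf)) ->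
  S_smirnov S -> 0 < b -> a != b -> inX (plug c (Node l a Leaf)) S b.
Proof. by move=> hc hT hS hb hab; split; rewrite ?plab_plug. Qed.

Lemma preimage_case1 c1 L y l b : principal_ctx c1 y -> ~~ lab_eq L y -> smir_ctx c1 y ->
  smir_node L y (single b) -> smir L -> smir_node l b Leaf -> smir l -> y != b ->
  isLeaf l || ((lab l < b) == (y < b)) ->
  let S := if isLeaf l then SD else ST l in
  inX (plug c1 (Node L y Leaf)) S b /\
  Phi (plug c1 (Node L y Leaf)) S b = plug (rcons c1 (FR L y)) (Node l b Leaf).
Proof.
move=> hc hLy hsc hnode hsL; rewrite smir_node_leaf => /andP[hb hlb] hsl hyb hcase S1.
have hy : 0 < y by case/and3P: hnode.
split.
  apply: inX_plug => //; first by rewrite smirnov_principal hsc hy hLy hsL.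
  by rewrite /S1; case: (l) hsl => //= l1 z r1 h; rewrite /smirnov /= h.
rewrite Phi_case1 //; first by rewrite /S1; case: (l).
by rewrite /S1; case: (l) hcase hlb => // l1 z r1 hc' hz; apply: case1_ST.
Qed.

Lemma preimage_case2 l b : ~~ isLeaf l -> smir l -> 0 < b -> lab l != b ->
  let: (T, S') := detach (same_side (lab l < b) b) l in
  inX T S' b /\ Phi T S' b = Node l b Leaf.
Proof.
move=> hne hs hb hlb; have := detach_smirnov hne hs (same_side_self hlb).
case: detach => T S' [c [l0 [a0 [[-> hl hc hT hS] [hsa hall hSb]]]]].
rewrite -(same_side_lt hsa) in hall hSb.
have hab : a0 != b by rewrite (same_side_neq hsa).
by split; [apply: inX_plug | rewrite (Phi_case2 l0 hc hb hab hSb hall) -hl].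
Qed.

Lemma preimage_case3 c1 L y l b : principal_ctx c1 y -> ~~ lab_eq L y -> smir_ctx c1 y ->
  smir_node L y (single b) -> smir L -> smir_node l b Leaf -> smir l -> y != b ->
  ~~ isLeaf l -> ((lab l < b) == (y < b)) = false ->
  let: (r, S') := detach (same_side (b < y) b) l in
  inX (plug c1 (Node L y r)) S' b /\
  Phi (plug c1 (Node L y r)) S' b = plug (rcons c1 (FR L y)) (Node l b Leaf).
Proof.
move=> hc hLy hsc hnode hsL; rewrite smir_node_leaf => /andP[hb hlb] hsl hyb hne hcase.
have hy : 0 < y by case/and3P: hnode.
have hlb' : lab l != b by move: hlb; rewrite hne.
have := detach_smirnov hne hsl (same_side_opposite hyb hlb' hcase).
case: detach => r S' [e [l0 [a0 [[-> hl hce hT hS] [hsa hall hSb]]]]].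
have hup := same_side_lt hsa.
have hab : a0 != b by rewrite (same_side_neq hsa).
have htop : top_lab e a0 != y.
  by rewrite (same_side_opposite_neq hyb (top_lab_all hall hsa)).
rewrite -[Node L y _]/(plug (FR L y :: e) (Node l0 a0 Leaf)) -plug_cat.
have hcj := principal_ctx_join hc hLy hce.
split; first by apply: inX_plug => //; apply: smirnov_join.
rewrite -hup in hall hSb.
have hd : reaches (a0 < b) b y by rewrite hup; apply: reaches_opposite.
by rewrite (Phi_case345 l0 hcj hb hab hSb hall hd) (negbTE hyb) -hl.
Qed.

Lemma preimage_case4 c1 r l b : principal_ctx c1 b -> smir_ctx c1 b -> ~~ isLeaf r ->
  smir_node (single b) b r -> smir r -> smir_node l b Leaf -> smir l ->
  let: (r', S') := detach (same_side true b) r in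
  inX (plug c1 (Node l b r')) S' b /\
  Phi (plug c1 (Node l b r')) S' b = plug (rcons c1 (FL b r)) (Node l b Leaf).
Proof.
move=> hc hsc hne hnode hsr; rewrite smir_node_leaf => /andP[hb hlb] hsl.
have hrb : same_side true b (lab r).
  by move: hnode; rewrite /smir_node /= eqxx => /and3P[_ /andP[_ ->] _].
have := detach_smirnov hne hsr hrb.
case: detach => r' S' [e [l0 [a0 [[-> hr hce hT hS] [hsa hall hSb]]]]].
have hab : a0 < b := hsa.
have hab' : a0 != b by rewrite neq_ltn hab.
have htop : top_lab e a0 != b by rewrite (same_side_neq (top_lab_all hall hsa)).
rewrite -[Node l b _]/(plug (FR l b :: e) (Node l0 a0 Leaf)) -plug_cat.
have hcj := principal_ctx_join hc hlb hce.
split; first by apply: inX_plug => //; apply: smirnov_join.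
have hall' : all (same_side (a0 < b) b) (map frame_lab e) by rewrite hab.
have hSb' : S_beyond (a0 < b) b S' by rewrite hab.
by rewrite (Phi_case345 l0 hcj hb hab' hSb' hall' (reaches_refl _ _)) hab eqxx -hr.
Qed.

Lemma preimage_case5 c1 r l b : principal_ctx c1 b -> smir_ctx c1 b ->
  smir_node r b (single b) -> smir r -> smir_node l b Leaf -> smir l ->
  let: (r', S') := detach (same_side false b) r in
  inX (plug c1 (Node l b r')) S' b /\
  Phi (plug c1 (Node l b r')) S' b = plug (rcons c1 (FR r b)) (Node l b Leaf).
Proof.
move=> hc hsc hnode hsr; rewrite smir_node_leaf => /andP[hb hlb] hsl.
have /andP[hne hrb] : ~~ isLeaf r && same_side false b (lab r).
  by move: hnode; rewrite /smir_node /= eqxx => /and3P[].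
have := detach_smirnov hne hsr hrb.
case: detach => r' S' [e [l0 [a0 [[-> hr hce hT hS] [hsa hall hSb]]]]].
have hab : b < a0 := hsa.
have hba : (a0 < b) = false by rewrite ltnNge ltnW.
have hab' : a0 != b by rewrite neq_ltn hab orbT.
have htop : top_lab e a0 != b by rewrite (same_side_neq (top_lab_all hall hsa)).
rewrite -[Node l b _]/(plug (FR l b :: e) (Node l0 a0 Leaf)) -plug_cat.
have hcj := principal_ctx_join hc hlb hce.
split; first by apply: inX_plug => //; apply: smirnov_join.
have hall' : all (same_side (a0 < b) b) (map frame_lab e) by rewrite hba.
have hSb' : S_beyond (a0 < b) b S' by rewrite hba.
by rewrite (Phi_case345 l0 hcj hb hab' hSb' hall' (reaches_refl _ _)) hba eqxx -hr.
Qed.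

Lemma Phi_image_spec T S b : inX T S b ->
  image_spec T S b (Phi T S b) /\
  forall (R : comNzRingType) (rho rhob lam lamb : R) (x : nat -> R),
    w rho rhob lam lamb x (Phi T S b) = wX rho rhob lam lamb x T S b.
Proof.
case=> hT hS hb hab; have hne : ~~ isLeaf T by case/andP: hT.
move: (principal_splitP hne); case: principal_split => [[c l] a] [hc eT] {hne}; subst T.
rewrite plab_plug // in hab.
case h1: (case1 a b S).
  by rewrite Phi_case1 //; split; [apply: image_spec_case1 | move=> *; apply: w_case1].
have hSb := case1_S_beyond hab h1.
case hall: (all (same_side (a < b) b) (map frame_lab c)).
  by rewrite Phi_case2 //; split; [apply: image_spec_case2 | move=> *; apply: w_case2].
move/negbT: hall; rewrite -hasN_reaches negbK has_map => /split_last_has.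
case=> [c1 [f [c2 [ec hf]]]]; rewrite -has_map hasN_reaches => hall; subst c.
case: f hf hc hT => [x r | ld d] /= hd hc hT.
  move: hc; rewrite principal_ctx_cat /= => /and3P[_ /andP[/eqP hx _] _].
  have := top_lab_all hall (same_side_self hab).
  by rewrite hx -reachesN hd.
rewrite Phi_case345 //; case: eqP => [edb | /eqP hdb].
  subst d; case: ltngtP hab => // hlt _.
  - by split; [apply: image_spec_case4 | move=> *; apply: w_case4].
  - by split; [apply: image_spec_case5 | move=> *; apply: w_case5].
by split; [apply: image_spec_case3 | move=> *; apply: w_case3].
Qed.

Lemma Phi_Phi_inv U : smirnov U -> 2 <= nnodes U ->
  let: (T, S', b) := Phi_inv U in inX T S' b /\ Phi T S' b = U.
Proof.
move=> hU hn; have hne : ~~ isLeaf U by case/andP: hU.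
move: (principal_splitP hne); rewrite /Phi_inv.
case: principal_split => [[c l] b] [hc eU] {hne}; subst U.
move: hU; rewrite smirnov_plug smirE => /andP[hsc /and3P[hnode hsl _]].
have := unsnocP c; case: unsnoc => [[c1 f]|] ec; subst c.
- case: f hc hsc hn => [x r | L y]; rewrite principal_ctx_rcons smir_ctx_rcons /=.
  + case/andP=> hc1 /andP[/eqP ex hr] /andP[hsc1 /andP[hnr hsr]] _; subst x.
    by have := preimage_case4 hc1 hsc1 hr hnr hsr hnode hsl; case: detach.
  + case/andP=> hc1 hLy /andP[hsc1 /andP[hnL hsL]] _.
    case: eqP => [eyb | /eqP hyb]; first subst y.
      by have := preimage_case5 hc1 hsc1 hnL hsL hnode hsl; case: detach.
    case: ifP => hcase; first exact: preimage_case1.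
    move/negbT: hcase; rewrite negb_or => /andP[hne /negbTE hcase].
    by have := preimage_case3 hc1 hLy hsc1 hnL hsL hnode hsl hyb hne hcase; case: detach.
- have hne : ~~ isLeaf l by case: (l) hn.
  move: hnode; rewrite smir_node_leaf hne => /andP[hb hlb].
  by have := preimage_case2 hne hsl hb hlb; case: detach.
Qed.

Theorem theorem1 :
  (* well defined: Phi maps X into Smirnov trees with at least 2 nodes *)
  (forall T S b, inX T S b -> smirnov (Phi T S b) /\ 2 <= nnodes (Phi T S b)) /\
  (* injective on X *)
  (forall T S b T' S' b', inX T S b -> inX T' S' b' ->
      Phi T S b = Phi T' S' b' -> [/\ T = T', S = S' & b = b']) /\
  (* surjective onto Smirnov trees with at least 2 nodes *)
  (forall U, smirnov U -> 2 <= nnodes U ->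
      exists T S b, inX T S b /\ Phi T S b = U) /\
  (* weight preserving *)
  (forall (R : comNzRingType) (rho rhob lam lamb : R) (x : nat -> R) T S b,
      inX T S b ->
      w rho rhob lam lamb x (Phi T S b) = wX rho rhob lam lamb x T S b) /\
  (* principal node of Phi(T,S,b) has label b *)
  (forall T S b, inX T S b -> plab (Phi T S b) = b).
Proof.
split; [|split; [|split; [|split]]].
- by move=> T S b /Phi_image_spec [[]].
- move=> T S b T' S' b' /Phi_image_spec [[_ _ _ h] _] /Phi_image_spec [[_ _ _ h'] _] e.
  by move: h; rewrite e h' => [[-> -> ->]].
- move=> U hU hn; move: (Phi_Phi_inv hU hn).
  by case: (Phi_inv U) => [[T S] b] ?; exists T, S, b.
- by move=> R rho rhob lam lamb x T S b /Phi_image_spec [_ ->].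
- by move=> T S b /Phi_image_spec [[]].
Qed.
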